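(* Let $\mathcal{C}$ be a super-modular tensor category and $\check{\mathcal{C}}$ any minimal modular extension of it. Suppose $e^{i\phi_a}$, $a\in\mathcal{C}$, are phases obeying $e^{i\phi_a}e^{i\phi_b}=e^{i\phi_c}$ whenever $N_{ab}^c\neq 0$ for $a,b,c\in\mathcal{C}$. Then $e^{i\phi_a}=M_{a,x}$ for some $x\in\check{\mathcal{C}}$, and if $e^{i\phi_\psi}=+1$, then $x\in\mathcal{A}$.
   Context: A super-modular tensor category $\mathcal{C}$ is a unitary braided fusion category whose only nontrivial transparent particle is a fermion $\psi$ ($\theta_\psi=-1$, $\psi\times\psi=1$). A minimal modular extension $\check{\mathcal{C}}$ is a unitary modular tensor category containing $\mathcal{C}$ with $\mathcal{D}^2_{\check{\mathcal{C}}}=2\mathcal{D}^2_{\mathcal{C}}$. $M_{ab}=S^*_{ab}S_{11}/(S_{1a}S_{1b})$ is the scalar monodromy in $\check{\mathcal{C}}$, and $\mathcal{A}\subset\mathcal{C}$ denotes the Abelian anyons of $\mathcal{C}$. (The set of such phase assignments forms the Abelian group $K(\mathcal{C})$.) *)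

(* Unitary modular tensor categories are encoded through
   their (unitary) modular data: a finite label set of simple objects with
   fusion rules N, an S-matrix and topological spins theta, subject to the
   standard identities satisfied by the modular data of any UMTC. *)
From HB Require Import structures.
From mathcomp Require Import all_boot all_order all_algebra.
Set Implicit Arguments. Unset Strict Implicit. Unset Printing Implicit Defensive.
Import Order.TTheory GRing.Theory Num.Theory.
Local Open Scope ring_scope.

Section ModularData.
Variables (K : numClosedFieldType) (L : finType) (one : L) (dual : L -> L)
          (N : L -> L -> L -> nat) (S : L -> L -> K) (theta : L -> K).

Definition qdim (a : L) : K := S one a / S one one.
Definition totdim : K := (S one one)^-1.

Definition monodromy (a b : L) : K :=
  (S a b)^* * S one one / (S one a * S one b).

Definition is_unitary_modular_data : Prop :=
  dual one = one /\ (forall a, dual (dual a) = a) /\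
  (forall a b, N one a b = (a == b) :> nat) /\
  (forall a b c, N a b c = N b a c) /\
  (forall a b, N a b one = (b == dual a) :> nat) /\
  (forall a b c, N a b c = N (dual a) c b) /\
  (forall a b c d, \sum_e N a b e * N e c d = \sum_f N b c f * N a f d)%N /\
  (forall a, `|theta a| = 1) /\ theta one = 1 /\
  (forall a, theta (dual a) = theta a) /\
  (forall a, 0 < S one a) /\
  (forall a b, S a b = S b a) /\
  (forall a b, S a (dual b) = (S a b)^*) /\
  (forall a c, \sum_b S a b * (S c b)^* = (a == c)%:R) /\
  (forall a b, S a b = totdim^-1 *
     \sum_c (N (dual a) b c)%:R * qdim c * theta c / (theta a * theta b)) /\
  (forall a b c, (N a b c)%:R = \sum_x S a x * S b x * (S c x)^* / S one x).

(* a subset of simple labels closed under unit, duals and fusion: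
   the simple objects of a full fusion subcategory *)
Definition fusion_subcat (inC : pred L) : Prop :=
  [/\ inC one, (forall a, inC a -> inC (dual a)) &
      (forall a b c, inC a -> inC b -> N a b c <> 0%N -> inC c)].

(* C (the labels inC inside the UMTC L) is super-modular with fermion psi,
   and L is a minimal modular extension of C:  D^2_L = 2 D^2_C. *)
Definition super_modular_with_min_ext (inC : pred L) (psi : L) : Prop :=
  is_unitary_modular_data /\ fusion_subcat inC /\ inC psi /\
  psi != one /\ theta psi = -1 /\
  (forall c, N psi psi c = (c == one) :> nat) /\
  (forall a, inC a -> ((forall b, inC b -> monodromy a b = 1) <->
                       (a = one \/ a = psi))) /\
  \sum_a qdim a ^+ 2 = 2 * \sum_(a | inC a) qdim a ^+ 2.

Definition abelian_anyon (inC : pred L) (a : L) : Prop :=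
  inC a /\ (forall c, N a (dual a) c = (c == one)%N).

End ModularData.

From Pilot Require Import Defs.
From mathcomp Require Import all_boot all_order all_algebra.
From mathcomp Require Import ring.
Import Order.TTheory GRing.Theory Num.Theory.
Local Open Scope ring_scope.

(* For every simple x, chi x a := S_{ax}/S_{1x} is a character of the fusion
   ring, and M_{ax} = (chi x a)^* / d_a.  The phases give a character
   f a := e^{-i phi_a} d_a of the fusion ring of C; extend it by 0 outside C
   and weight each x by |f^(x)|^2, where f^ is the S-transform of f.  Under
   this weight chi_x(b) has mean f b and second moment |f b|^2 for b in C, so
   its variance vanishes and chi x = f on C for every x of nonzero weight,
   i.e. e^{i phi_a} = M_{ax}.
   For the second claim, chi_y(psi) = +-1, and the dimension count
   D^2 = 2 D_C^2 forces chi_y(psi) = 1 exactly for y in C.  So f psi = 1 puts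
   x in C; then evaluating sum_{b in C} |S_{bx}|^2 once through chi x = f and
   once through the indicator (1 + chi_b(psi))/2 of C gives d_x = 1. *)

Set Implicit Arguments.
Unset Strict Implicit.

Lemma sumr_delta (R : nzRingType) (T : finType) (F : T -> R) (x : T) :
  \sum_y F y * (x == y)%:R = F x.
Proof.
rewrite (bigD1 x) //= eqxx mulr1 big1 ?addr0 // => y ne.
by rewrite eq_sym (negbTE ne) mulr0.
Qed.

Section ModularData.
Variables (K : numClosedFieldType) (L : finType) (one : L) (dual : L -> L)
  (N : L -> L -> L -> nat) (S : L -> L -> K) (theta : L -> K).
Hypothesis UMD : is_unitary_modular_data one dual N S theta.

Local Notation qdim := (qdim one S).
Local Notation monodromy := (monodromy one S).

Lemma dualK a : dual (dual a) = a.
Proof. by case: UMD => _ [H _]. Qed.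
Lemma fusion_unitl a b : N one a b = (a == b) :> nat.
Proof. by case: UMD => _ [_ [H _]]. Qed.
Lemma fusionC a b c : N a b c = N b a c.
Proof. by case: UMD => _ [_ [_ [H _]]]. Qed.
Lemma fusion_unit a b : N a b one = (b == dual a) :> nat.
Proof. by case: UMD => _ [_ [_ [_ [H _]]]]. Qed.
Lemma norm_theta a : `|theta a| = 1.
Proof. by case: UMD => _ [_ [_ [_ [_ [_ [_ [H _]]]]]]]. Qed.
Lemma S1_gt0 a : 0 < S one a.
Proof. by case: UMD => _ [_ [_ [_ [_ [_ [_ [_ [_ [_ [H _]]]]]]]]]]. Qed.
Lemma SC a b : S a b = S b a.
Proof. by case: UMD => _ [_ [_ [_ [_ [_ [_ [_ [_ [_ [_ [H _]]]]]]]]]]]. Qed.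
Lemma S_dual a b : S a (dual b) = (S a b)^*.
Proof. by case: UMD => _ [_ [_ [_ [_ [_ [_ [_ [_ [_ [_ [_ [H _]]]]]]]]]]]]. Qed.
Lemma S_unitary a c : \sum_b S a b * (S c b)^* = (a == c)%:R.
Proof. by case: UMD => _ [_ [_ [_ [_ [_ [_ [_ [_ [_ [_ [_ [_ [H _]]]]]]]]]]]]]. Qed.
Lemma S_balancing a b : S a b = (totdim one S)^-1 *
  \sum_c (N (dual a) b c)%:R * qdim c * theta c / (theta a * theta b).
Proof. by case: UMD => _ [_ [_ [_ [_ [_ [_ [_ [_ [_ [_ [_ [_ [_ [H _]]]]]]]]]]]]]]. Qed.
Lemma verlinde a b c : (N a b c)%:R = \sum_x S a x * S b x * (S c x)^* / S one x.
Proof. by case: UMD => _ [_ [_ [_ [_ [_ [_ [_ [_ [_ [_ [_ [_ [_ [_ H]]]]]]]]]]]]]]. Qed.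

Lemma S1_neq0 a : S one a != 0.
Proof. by rewrite gt_eqF ?S1_gt0. Qed.
Lemma conj_S1 a : (S one a)^* = S one a.
Proof. by rewrite conj_Creal // gtr0_real ?S1_gt0. Qed.

Lemma S_unitary_col x y : \sum_c S c x * (S c y)^* = (x == y)%:R.
Proof. by rewrite -S_unitary; apply: eq_bigr => c _; rewrite (SC c x) (SC c y). Qed.

Lemma sum_S1_sqr : \sum_x S one x ^+ 2 = 1.
Proof.
transitivity ((one == one)%:R : K); last by rewrite eqxx.
by rewrite -S_unitary; apply: eq_bigr => x _; rewrite conj_S1.
Qed.

Definition chi (x a : L) : K := S a x / S one x.

Lemma sum_fusion_S a b x : \sum_c (N a b c)%:R * S c x = S a x * chi x b.
Proof.
under eq_bigr => c _ do rewrite verlinde mulr_suml.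
rewrite exchange_big /= -(sumr_delta (fun y => S a y * chi y b) x).
apply: eq_bigr => y _; rewrite -S_unitary_col mulr_sumr.
by apply: eq_bigr => c _; rewrite /chi; ring.
Qed.

Lemma chi_mul x a b : chi x a * chi x b = \sum_c (N a b c)%:R * chi x c.
Proof.
rewrite {1}/chi; under eq_bigr => c _ do rewrite /chi mulrA.
by rewrite -mulr_suml sum_fusion_S; field; rewrite S1_neq0.
Qed.

Lemma chi1 x : chi x one = 1.
Proof. by rewrite /chi divff ?S1_neq0. Qed.

Lemma conj_chi x a : (chi x a)^* = chi x (dual a).
Proof. by rewrite /chi rmorphM /= fmorphV /= conj_S1 SC -S_dual SC. Qed.

Lemma qdimE a : qdim a = chi one a.
Proof. by rewrite /chi SC. Qed.

Lemma qdim_gt0 a : 0 < qdim a.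
Proof. by rewrite divr_gt0 ?S1_gt0. Qed.

Lemma qdim1 : qdim one = 1.
Proof. by rewrite qdimE chi1. Qed.

Lemma conj_qdim a : (qdim a)^* = qdim a.
Proof. by rewrite conj_Creal // gtr0_real ?qdim_gt0. Qed.

Lemma qdim_dual a : qdim (dual a) = qdim a.
Proof. by rewrite /Defs.qdim S_dual conj_S1. Qed.

Lemma qdim_mul a b : qdim a * qdim b = \sum_c (N a b c)%:R * qdim c.
Proof. by rewrite !qdimE chi_mul; under eq_bigr => c _ do rewrite -qdimE. Qed.

Lemma monodromyE a x : monodromy a x = (chi x a)^* / qdim a.
Proof.
rewrite /Defs.monodromy /chi /Defs.qdim rmorphM /= fmorphV /= conj_S1.
by field; rewrite !S1_neq0.
Qed.

Lemma sum_S1_sqr_chi a : \sum_y S one y ^+ 2 * chi y a = (a == one)%:R.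
Proof.
rewrite -S_unitary; apply: eq_bigr => y _.
by rewrite conj_S1 /chi; field; rewrite S1_neq0.
Qed.

Lemma fusion_singleton a b c0 : qdim a * qdim b = qdim c0 -> N a b c0 != 0%N ->
  forall c, N a b c = (c == c0) :> nat.
Proof.
rewrite qdim_mul (bigD1 c0) //=; case En: (N a b c0) => [//|m] dE _.
have term_ge0 n c : 0 <= n%:R * qdim c by rewrite mulr_ge0 ?ler0n // ltW ?qdim_gt0.
have rest_ge0 : 0 <= \sum_(c | c != c0) (N a b c)%:R * qdim c.
  by apply: sumr_ge0 => c _; apply: term_ge0.
have : m%:R * qdim c0 + \sum_(c | c != c0) (N a b c)%:R * qdim c == 0.
  by apply/eqP/(addIr (qdim c0)); rewrite add0r -[RHS]dE mulrSr mulrDl; ring.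
rewrite (paddr_eq0 (term_ge0 _ _) rest_ge0) mulf_eq0 (gt_eqF (qdim_gt0 c0)) orbF.
rewrite pnatr_eq0 psumr_eq0 => [|c _]; last exact: term_ge0.
case/andP => /eqP m0 /allP Nc0 c; case: eqVneq => [->|cc0]; first by rewrite En m0.
move: (Nc0 c (mem_index_enum _)); rewrite cc0 mulf_eq0 (gt_eqF (qdim_gt0 c)) orbF.
by rewrite pnatr_eq0 => /eqP.
Qed.

Lemma fusion_dual_of_qdim1 x : qdim x = 1 ->
  forall c, N x (dual x) c = (c == one) :> nat.
Proof.
move=> dx1; apply: fusion_singleton; first by rewrite qdim_dual dx1 mulr1 qdim1.
by rewrite fusion_unit eqxx.
Qed.

Section FusionSubcategory.
Variable inC : pred L.
Hypothesis HC : fusion_subcat one dual N inC.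

Lemma inC1 : inC one.
Proof. by case: HC. Qed.
Lemma inC_dual a : inC a -> inC (dual a).
Proof. by case: HC => _ H _; apply: H. Qed.
Lemma fusion_notinC a b c : inC a -> inC b -> ~~ inC c -> N a b c = 0%N.
Proof. by case: HC => _ _ H ha hb; apply: contraNeq => /eqP; apply: H. Qed.

Section SubringCharacter.
Variable f : L -> K.
Hypothesis f1 : f one = 1.
Hypothesis f_dual : forall a, f (dual a) = (f a)^*.
Hypothesis f_mul : forall a b, inC a -> inC b -> f a * f b = \sum_c (N a b c)%:R * f c.
Hypothesis f_notinC : forall a, ~~ inC a -> f a = 0.

Let fourier x := \sum_c (S c x)^* * f c.
Let weight x := (fourier x)^* * fourier x.
Let total := \sum_a (f a)^* * f a.

Lemma fourier_inversion a : \sum_x S a x * fourier x = f a.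
Proof.
under eq_bigr => x _ do rewrite mulr_sumr.
rewrite exchange_big /= -(sumr_delta f a); apply: eq_bigr => c _.
by rewrite -S_unitary mulr_sumr; apply: eq_bigr => x _; ring.
Qed.

Lemma conj_fourier x : (fourier x)^* = \sum_c S c x * (f c)^*.
Proof. by rewrite rmorph_sum; apply: eq_bigr => c _; rewrite rmorphM /= conjCK. Qed.

Lemma f_mul_fourier a b : inC a -> inC b ->
  f a * f b = \sum_x fourier x * S a x * chi x b.
Proof.
move=> ha hb; rewrite f_mul //.
under eq_bigr => c _ do rewrite -fourier_inversion mulr_sumr.
rewrite exchange_big /=; apply: eq_bigr => x _.
by rewrite -mulrA -sum_fusion_S mulr_sumr; apply: eq_bigr => c _; ring.
Qed.

Lemma weight_chi b : inC b -> \sum_x weight x * chi x b = total * f b.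
Proof.
move=> hb; rewrite mulr_suml.
transitivity (\sum_a (f a)^* * \sum_x fourier x * S a x * chi x b).
  under [RHS]eq_bigr => a _ do rewrite mulr_sumr.
  rewrite exchange_big /=; apply: eq_bigr => x _.
  by rewrite /weight conj_fourier !mulr_suml; apply: eq_bigr => a _; ring.
apply: eq_bigr => a _; have [ha|ha] := boolP (inC a).
  by rewrite -f_mul_fourier // mulrA.
by rewrite f_notinC // rmorph0 !mul0r.
Qed.

Lemma sum_weight : \sum_x weight x = total.
Proof.
rewrite -[RHS]mulr1 -f1 -weight_chi ?inC1 //.
by apply: eq_bigr => x _; rewrite chi1 mulr1.
Qed.

Lemma weight_chi_normsq b : inC b ->
  \sum_x weight x * (chi x b * (chi x b)^*) = total * (f b * (f b)^*).
Proof.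
move=> hb; rewrite -f_dual f_mul ?inC_dual // mulr_sumr.
under eq_bigr => x _ do rewrite conj_chi chi_mul mulr_sumr.
rewrite exchange_big /=; apply: eq_bigr => c _.
have [hc|hc] := boolP (inC c).
  by rewrite mulrCA -weight_chi // mulr_sumr; apply: eq_bigr => x _; ring.
rewrite fusion_notinC ?inC_dual // mul0r mulr0.
by rewrite big1 // => x _; rewrite mul0r mulr0.
Qed.

Lemma weight_ge0 x : 0 <= weight x.
Proof. by rewrite /weight mulrC mul_conjC_ge0. Qed.

Lemma conj_weight x : (weight x)^* = weight x.
Proof. by rewrite conj_Creal // ger0_real ?weight_ge0. Qed.

Lemma conj_total : total^* = total.
Proof.
rewrite -sum_weight rmorph_sum.
by apply: eq_bigr => x _; rewrite /= (conj_weight x).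
Qed.

Lemma total_neq0 : total != 0.
Proof.
rewrite psumr_neq0 => [|a _]; last by rewrite mulrC mul_conjC_ge0.
by apply/hasP; exists one; rewrite ?mem_index_enum // f1 rmorph1 mulr1 ltr01.
Qed.

Lemma weight_variance b : inC b ->
  \sum_x weight x * ((chi x b - f b) * (chi x b - f b)^*) = 0.
Proof.
move=> hb.
have expand x : weight x * ((chi x b - f b) * (chi x b - f b)^*) =
    weight x * (chi x b * (chi x b)^*) - (weight x * chi x b) * (f b)^*
    - f b * (weight x * chi x b)^* + weight x * (f b * (f b)^*).
  by rewrite !rmorphB [X in f b * X]rmorphM /= (conj_weight x); ring.
rewrite (eq_bigr _ (fun x _ => expand x)) big_split /= !sumrB weight_chi_normsq //.
rewrite -!mulr_suml -mulr_sumr -rmorph_sum weight_chi // sum_weight.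
by rewrite rmorphM /= conj_total; ring.
Qed.

Lemma chi_eq_on_support x b : inC b -> weight x != 0 -> chi x b = f b.
Proof.
move=> hb wx; apply/eqP; rewrite -subr_eq0 -mul_conjC_eq0.
move/eqP: (weight_variance hb); rewrite psumr_eq0 => [|y _]; last first.
  by rewrite mulr_ge0 ?weight_ge0 ?mul_conjC_ge0.
by move/allP/(_ x (mem_index_enum _)); rewrite mulf_eq0 (negbTE wx).
Qed.

Lemma character_extends_to_chi : exists x, forall b, inC b -> chi x b = f b.
Proof.
have [x wx] : exists x, weight x != 0.
  apply/existsP; apply: contraNT total_neq0 => /existsPn wx0.
  by rewrite -sum_weight big1 // => x _; apply/eqP; rewrite -[_ == _]negbK wx0.
by exists x => b hb; apply: chi_eq_on_support.
Qed.

End SubringCharacter.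

Section Phases.
Variable phase : L -> K.
Hypothesis phase_norm : forall a, inC a -> `|phase a| = 1.
Hypothesis phase_mul : forall a b c, inC a -> inC b -> inC c -> N a b c <> 0%N ->
  phase a * phase b = phase c.

Lemma mul_conj_phase a : inC a -> (phase a)^* * phase a = 1.
Proof. by move=> ha; rewrite mulrC -normCK phase_norm ?expr1n. Qed.

Lemma phase1 : phase one = 1.
Proof.
have ph1_neq0 : phase one != 0 by rewrite -normr_eq0 phase_norm ?inC1 ?oner_eq0.
apply: (mulfI ph1_neq0); rewrite mulr1 (@phase_mul one one one) ?inC1 //.
by rewrite fusion_unitl eqxx.
Qed.

Lemma phase_dual a : inC a -> phase (dual a) = (phase a)^*.
Proof.
move=> ha; rewrite -[LHS]mul1r -(mul_conj_phase ha) -mulrA.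
rewrite (@phase_mul a (dual a) one) ?inC1 ?inC_dual //.
  by rewrite phase1 mulr1.
by rewrite fusion_unit eqxx.
Qed.

Definition phase_qdim a := if inC a then (phase a)^* * qdim a else 0.

Lemma phase_qdim1 : phase_qdim one = 1.
Proof. by rewrite /phase_qdim inC1 phase1 qdim1 rmorph1 mulr1. Qed.

Lemma phase_qdim_notinC a : ~~ inC a -> phase_qdim a = 0.
Proof. by rewrite /phase_qdim => /negbTE ->. Qed.

Lemma phase_qdim_dual a : phase_qdim (dual a) = (phase_qdim a)^*.
Proof.
have [ha|ha] := boolP (inC a).
  by rewrite /phase_qdim ha inC_dual // phase_dual // qdim_dual rmorphM /= conj_qdim.
rewrite !phase_qdim_notinC ?rmorph0 //.
by apply: contra ha => /inC_dual; rewrite dualK.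
Qed.

Lemma phase_qdim_mul a b : inC a -> inC b ->
  phase_qdim a * phase_qdim b = \sum_c (N a b c)%:R * phase_qdim c.
Proof.
move=> ha hb; rewrite /phase_qdim ha hb mulrACA qdim_mul mulr_sumr.
apply: eq_bigr => c _; have [hc|hc] := boolP (inC c); last first.
  by rewrite fusion_notinC // !mul0r mulr0.
have [->|nz] := eqVneq (N a b c) 0%N; first by rewrite !mul0r mulr0.
rewrite -(phase_mul ha hb hc); last exact/eqP.
by rewrite rmorphM /=; ring.
Qed.

Lemma phase_qdim_normsq a : inC a -> phase_qdim a * (phase_qdim a)^* = qdim a ^+ 2.
Proof.
move=> ha; rewrite /phase_qdim ha rmorphM /= conjCK conj_qdim.
by rewrite mulrACA mul_conj_phase // mul1r expr2.
Qed.

Lemma phase_qdim_chi : exists x, forall a, inC a -> chi x a = phase_qdim a.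
Proof.
apply: character_extends_to_chi.
- exact: phase_qdim1.
- exact: phase_qdim_dual.
- exact: phase_qdim_mul.
- exact: phase_qdim_notinC.
Qed.

Lemma phase_monodromy x : (forall a, inC a -> chi x a = phase_qdim a) ->
  forall a, inC a -> phase a = monodromy a x.
Proof.
move=> chixE a ha; rewrite monodromyE chixE // /phase_qdim ha rmorphM /= conjCK.
by rewrite conj_qdim mulfK // gt_eqF ?qdim_gt0.
Qed.

End Phases.

Section SuperModular.
Variable psi : L.
Hypothesis SM : super_modular_with_min_ext one dual N S theta inC psi.

Let two_neq0 : (2 : K) != 0.
Proof. by rewrite pnatr_eq0. Qed.

Lemma psi_inC : inC psi.
Proof. by case: SM => _ [_ []]. Qed.
Lemma psi_neq1 : psi != one.
Proof. by case: SM => _ [_ [_ []]]. Qed.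
Lemma theta_psi : theta psi = -1.
Proof. by case: SM => _ [_ [_ [_ []]]]. Qed.
Lemma fusion_psi_psi c : N psi psi c = (c == one) :> nat.
Proof. by case: SM => _ [_ [_ [_ [_ [H _]]]]]. Qed.
Lemma psi_transparent b : inC b -> monodromy psi b = 1.
Proof.
by case: SM => _ [_ [_ [_ [_ [_ [H _]]]]]] hb; apply: (proj2 (H psi psi_inC)) => //; right.
Qed.
Lemma min_ext_dim : \sum_a qdim a ^+ 2 = 2 * \sum_(a | inC a) qdim a ^+ 2.
Proof. by case: SM => _ [_ [_ [_ [_ [_ [_ H]]]]]]. Qed.

Lemma dual_psi : dual psi = psi.
Proof. by apply/eqP; have := fusion_unit psi psi; rewrite fusion_psi_psi eqxx eq_sym; case: eqP. Qed.

Lemma qdim_psi : qdim psi = 1.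
Proof.
apply/eqP; rewrite -sqrp_eq1 ?ltW ?qdim_gt0 // expr2 qdim_mul.
under eq_bigr => c _ do rewrite fusion_psi_psi mulrC eq_sym.
by rewrite sumr_delta qdim1.
Qed.

Lemma chi_psi_sqr x : chi x psi ^+ 2 = 1.
Proof.
rewrite expr2 chi_mul; under eq_bigr => c _ do rewrite fusion_psi_psi mulrC eq_sym.
by rewrite sumr_delta chi1.
Qed.

Lemma chi_psi_inC y : inC y -> chi y psi = 1.
Proof.
move/psi_transparent; rewrite monodromyE qdim_psi divr1 => /(congr1 Num.conj).
by rewrite conjCK rmorph1.
Qed.

Lemma sum_inC_S1_sqr : \sum_(y | inC y) S one y ^+ 2 = 2^-1.
Proof.
have sq_qdim P : \sum_(a | P a) qdim a ^+ 2 = (\sum_(a | P a) S one a ^+ 2) / S one one ^+ 2.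
  by rewrite mulr_suml; apply: eq_bigr => a _; rewrite expr_div_n.
have s_neq0 : (S one one ^+ 2)^-1 != 0 by rewrite invr_neq0 ?expf_neq0 ?S1_neq0.
move: min_ext_dim; rewrite !sq_qdim sum_S1_sqr => e.
apply: (mulfI two_neq0); rewrite divff ?two_neq0 //; apply: (mulIf s_neq0).
by rewrite -mulrA -e mul1r.
Qed.

Lemma chi_psi_notinC y : ~~ inC y -> chi y psi = -1.
Proof.
(* The nonnegative sum of the T y equals 1 and is already exhausted by C. *)
move=> hy; pose T y := S one y ^+ 2 * (1 + chi y psi).
have T_ge0 z : 0 <= T z.
  apply: mulr_ge0; first by rewrite exprn_ge0 // ltW ?S1_gt0.
  have : (chi z psi == 1) || (chi z psi == -1) by rewrite -sqrf_eq1 chi_psi_sqr.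
  by case/orP => /eqP ->; rewrite ?subrr ?addr_ge0 ?ler01.
have sumT : \sum_z T z = 1.
  rewrite /T; under eq_bigr => z _ do rewrite mulrDr mulr1.
  by rewrite big_split /= sum_S1_sqr sum_S1_sqr_chi (negbTE psi_neq1) addr0.
have sum_inC_T : \sum_(z | inC z) T z = 1.
  rewrite /T; under eq_bigr => z hz do rewrite chi_psi_inC //.
  by rewrite -mulr_suml sum_inC_S1_sqr mulVf ?two_neq0.
have : \sum_(z | ~~ inC z) T z == 0.
  by move: sumT; rewrite (bigID inC) /= sum_inC_T -[RHS]addr0 => /addrI ->.
rewrite psumr_eq0 // => /allP/(_ y (mem_index_enum _)); rewrite hy /= /T.
by rewrite mulf_eq0 expf_eq0 /= (negbTE (S1_neq0 y)) addrC addr_eq0 => /eqP.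
Qed.

Lemma inC_chi_psi y : inC y = (chi y psi == 1).
Proof.
have [hy|hy] := boolP (inC y); first by rewrite chi_psi_inC ?eqxx.
by rewrite chi_psi_notinC // -subr_eq0 -opprD oppr_eq0 -mulr2n mulrn_eq0 oner_eq0.
Qed.

Lemma fusion_psi_diag x : inC x -> N psi x x = 0%N.
Proof.
(* Otherwise psi x = x, and the balancing formula gives S_{psi x} = - S_{1x},
   against the transparency of psi in C. *)
move=> hx; apply: contraTeq (S1_neq0 x); rewrite negbK => nz.
have psixE := fusion_singleton (etrans (congr1 (GRing.mul^~ _) qdim_psi) (mul1r _)) nz.
have SpsiE : S psi x = S one x.
  by rewrite -[LHS](mulfVK (S1_neq0 x)) -/(chi x psi) chi_psi_inC // mul1r.
have theta_neq0 : theta x != 0 by rewrite -normr_eq0 norm_theta oner_eq0.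
have := S_balancing psi x; rewrite dual_psi /totdim invrK (bigD1 x) //= big1 ?addr0.
  rewrite psixE eqxx /= theta_psi SpsiE /Defs.qdim => e.
  have : S one x = - S one x by rewrite {1}e; field; rewrite theta_neq0 S1_neq0.
  by move/eqP; rewrite -addr_eq0 -mulr2n mulrn_eq0.
by move=> c cx; rewrite psixE (negbTE cx) !mul0r.
Qed.

Lemma sum_inC_normS x : inC x -> \sum_(b | inC b) S b x * (S b x)^* = 2^-1.
Proof.
move=> hx; rewrite big_mkcond /=.
transitivity (\sum_b 2^-1 * (S b x * (S b x)^* * (1 + chi b psi))).
  apply: eq_bigr => b _; have [hb|hb] := boolP (inC b).
    by rewrite chi_psi_inC //; field.
  by rewrite chi_psi_notinC // subrr !mulr0.
rewrite -mulr_sumr; under eq_bigr => b _ do rewrite mulrDr mulr1.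
rewrite big_split /= S_unitary_col eqxx.
have -> : \sum_b S b x * (S b x)^* * chi b psi = (N x psi x)%:R.
  by rewrite verlinde; apply: eq_bigr => b _; rewrite /chi (SC x b); ring.
by rewrite fusionC fusion_psi_diag // addr0 mulr1.
Qed.

Lemma qdim_eq1 x : inC x -> (forall b, inC b -> chi x b * (chi x b)^* = qdim b ^+ 2) ->
  qdim x = 1.
Proof.
move=> hx chi_normsq.
have : qdim x ^+ 2 * 2^-1 = 1 * 2^-1.
  rewrite mul1r -[in RHS](sum_inC_normS hx) -sum_inC_S1_sqr mulr_sumr.
  apply: eq_bigr => b hb.
  have SbxE : S b x = chi x b * S one x by rewrite mulfVK ?S1_neq0.
  rewrite SbxE rmorphM /= conj_S1 [RHS]mulrACA chi_normsq // /Defs.qdim.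
  by field; rewrite S1_neq0.
move/(mulIf (invr_neq0 two_neq0))/eqP.
by rewrite sqrp_eq1 ?ltW ?qdim_gt0 // => /eqP.
Qed.

End SuperModular.

End FusionSubcategory.

End ModularData.

Theorem mainTheorem2 (K : numClosedFieldType) (L : finType) (one : L)
  (dual : L -> L) (N : L -> L -> L -> nat) (S : L -> L -> K) (theta : L -> K)
  (inC : pred L) (psi : L) (phase : L -> K) :
  super_modular_with_min_ext one dual N S theta inC psi ->
  (forall a, inC a -> `|phase a| = 1) ->
  (forall a b c, inC a -> inC b -> inC c -> N a b c <> 0%N ->
     phase a * phase b = phase c) ->
  exists x : L,
    (forall a, inC a -> phase a = monodromy one S a x) /\
    (phase psi = 1 -> abelian_anyon one dual N inC x).
Proof.
move=> SM phase_norm phase_mul; have [UMD [HC _]] := SM.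
have [x chixE] := phase_qdim_chi UMD HC phase_norm phase_mul.
exists x; split; first by move=> a ha; exact (phase_monodromy UMD chixE ha).
move=> phase_psi1.
have xC : inC x.
  rewrite (inC_chi_psi UMD SM) chixE ?(psi_inC SM) // /phase_qdim (psi_inC SM).
  by rewrite phase_psi1 rmorph1 mul1r (qdim_psi UMD SM).
split=> //; apply: (fusion_dual_of_qdim1 UMD); apply: (qdim_eq1 UMD SM xC) => b hb.
by rewrite chixE // (phase_qdim_normsq UMD phase_norm).
Qed.
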